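(* Let $\mathcal{M}$ be a separable metric space, $f:\mathcal{M}\to\mathcal{M}$ a continuous bijection with continuous inverse, $\mathcal{X}\subseteq\mathcal{M}$ forward invariant under $f$, $\mathcal{Z}$ a separable metric space, $g:\mathcal{Z}\to\mathcal{Z}$ a continuous bijection with continuous inverse, and $F:\mathcal{X}\to\mathcal{Z}$ continuous with $F\circ f=g\circ F$ on $\mathcal{X}$. For $\xi\in\mathcal{X}$, if $\alpha_{\mathcal{X}}(\xi)$ is nonempty, then $F(\alpha_{\mathcal{X}}(\xi))\subseteq\alpha_{\mathcal{Z}}(F(\xi))$. Furthermore, if the trajectory through $\xi$ is backward precompact in $\mathcal{X}$, then $F(\alpha_{\mathcal{X}}(\xi))=\alpha_{\mathcal{Z}}(F(\xi))$.
   Context: $\alpha_{\mathcal{X}}(\xi)$ is the set of $x\in\mathcal{X}$ such that $f^{-k_j}(\xi)\to x$ for some indices $k_j\to\infty$, where $f^{-k}$ is the $k$-th iterate of $f^{-1}$; $\alpha_{\mathcal{Z}}(\zeta)$ is the set of $z\in\mathcal{Z}$ with $g^{-k_j}(\zeta)\to z$ for some $k_j\to\infty$. The trajectory through $\xi$ is backward precompact in $\mathcal{X}$ if the closure in $\mathcal{X}$ of $\{f^{-k}(\xi)\mid k\in\mathbb{N}\}$ is compact.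
   Formalization: Both parts also assume that the backward trajectory of ξ stays in 𝒳, that is, $f^{-k}(\xi)\in\mathcal{X}$ for every k ∈ ℕ. The paper assumes this as well. *)

From HB Require Import structures.
From mathcomp Require Import all_boot all_order all_algebra.
From mathcomp Require Import all_classical all_reals all_analysis.
Set Implicit Arguments. Unset Strict Implicit. Unset Printing Implicit Defensive.
Import Order.TTheory GRing.Theory Num.Theory.
Local Open Scope classical_set_scope.

Definition separable_space (T : topologicalType) : Prop :=
  exists D : set T, countable D /\ dense D.

Definition homeo_with_inv (T : topologicalType) (f finv : T -> T) : Prop :=
  cancel f finv /\ cancel finv f /\ continuous f /\ continuous finv.

Definition alpha_limit (T : topologicalType) (finv : T -> T) (A : set T) (xi : T)
  : set T :=
  [set x | A x /\ exists k : nat -> nat,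
      (forall N : nat, \forall j \near \oo, (N <= k j)%N) /\
      (fun j => iter (k j) finv xi) @ \oo --> x].

(* The trajectory through xi is backward precompact in A: the closure in A
   (i.e. closure `&` A, the subspace closure) of the backward orbit is compact. *)
Definition backward_precompact (T : topologicalType) (finv : T -> T) (A : set T)
  (xi : T) : Prop :=
  compact (closure (range (fun k : nat => iter k finv xi)) `&` A).

From HB Require Import structures.
From mathcomp Require Import all_boot all_order all_algebra.
From mathcomp Require Import all_classical all_reals all_analysis.
Import Order.TTheory GRing.Theory Num.Theory.
Local Open Scope classical_set_scope.
Set Implicit Arguments. Unset Strict Implicit.

(* Since F semiconjugates the backward dynamics, F (finv^k xi) = ginv^k (F xi);
   continuity of F within X then maps backward limits of xi in X to backward
   limits of F xi.  Conversely, if ginv^(k_j) (F xi) --> z, compactness of the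
   closed backward orbit gives a cluster point x in X of finv^(k_j) xi, a
   subsequence converges to x because M is metric, and z = F x by uniqueness
   of limits in Z. *)

Lemma alpha_limitP (T : topologicalType) (finv : T -> T) (A : set T) xi x :
  alpha_limit finv A xi x <->
  A x /\ exists2 k : nat -> nat,
    k @ \oo --> \oo & (fun j => iter (k j) finv xi) @ \oo --> x.
Proof.
by split=> [[Ax [k [/cvgnyPge kinf kx]]]|[Ax [k /cvgnyPge kinf kx]]];
  split=> //; exists k.
Qed.

Lemma cvgn_infty_ge (j : nat -> nat) : (forall n, (n <= j n)%N) -> j @ \oo --> \oo.
Proof.
move=> jge; apply/cvgnyPge => N; near=> n.
by rewrite (leq_trans _ (jge n)) //; near: n; exact: nbhs_infty_ge.
Unshelve. all: end_near. Qed.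

Lemma cvg_within_continuous (T U : topologicalType) (X : set T) (F : T -> U)
    (I : Type) (G : set_system I) {FG : Filter G} (u : I -> T) x :
  {within X, continuous F} -> X x -> (forall i, X (u i)) ->
  u @ G --> x -> (F \o u) @ G --> F x.
Proof.
move=> /subspace_continuousP cF Xx Xu ux; apply: cvg_trans (cF x Xx).
have uXx : u @ G --> within X (nbhs x).
  by move=> P /ux; apply: (@filterS _ G) => i; apply; exact: Xu.
exact: cvg_app uXx.
Qed.

Lemma cluster_subseq_cvg (R : archiRealFieldType) (T : pseudoMetricType R)
    (y : nat -> T) x :
  cluster (y @ \oo) x ->
  exists2 j : nat -> nat, j @ \oo --> \oo & y \o j @ \oo --> x.
Proof.
move=> yx.
have near_x n : exists j, (n <= j)%N /\ ball x n.+1%:R^-1 (y j).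
  have tail_n : (y @ \oo) (y @` [set j | (n <= j)%N]).
    by exists n => // j /= nj; exists j.
  have [|_ [[j nj <-] xyj]] := yx _ _ tail_n (nbhsx_ballx x n.+1%:R^-1 _).
    by rewrite invr_gt0 ltr0n.
  by exists j.
have [j jP] := choice near_x.
exists j; first exact: cvgn_infty_ge (fun n => (jP n).1).
apply/cvg_ballP => e e0; have := near_infty_natSinv_lt (PosNum e0).
by apply: filterS => n /ltW /le_ball; apply; exact: (jP n).2.
Qed.

Lemma iter_inv_semiconj (M Z : Type) (X : set M) (f finv : M -> M)
    (g ginv : Z -> Z) (F : M -> Z) (xi : M) :
  cancel finv f -> cancel g ginv ->
  (forall x, X x -> F (f x) = g (F x)) -> (forall k, X (iter k finv xi)) ->
  forall k, iter k ginv (F xi) = F (iter k finv xi).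
Proof.
move=> finvK gK Fsemiconj orbitX; elim=> [//|k IHk].
by rewrite !iterS IHk -[in LHS](finvK (iter k finv xi)) -iterS Fsemiconj ?gK.
Qed.

Section alpha_limit_image.
Context {R : archiRealFieldType} {M : pseudoMetricType R} {Z : topologicalType}.
Variables (f finv : M -> M) (g ginv : Z -> Z) (X : set M) (F : M -> Z) (xi : M).
Hypotheses (finvK : cancel finv f) (gK : cancel g ginv).
Hypothesis FX : {within X, continuous F}.
Hypothesis Fsemiconj : forall x, X x -> F (f x) = g (F x).
Hypothesis orbitX : forall k, X (iter k finv xi).

Let iterF := iter_inv_semiconj finvK gK Fsemiconj orbitX.

Lemma image_alpha_limit_sub :
  F @` alpha_limit finv X xi `<=` alpha_limit ginv setT (F xi).
Proof.
move=> _ [x /alpha_limitP[Xx [k kinf kx]] <-]; apply/alpha_limitP; split=> //.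
exists k => //; rewrite (_ : (fun j => _) = F \o (fun j => iter (k j) finv xi)).
  exact: cvg_within_continuous FX Xx (fun j => orbitX (k j)) kx.
by apply: funext => j; exact: iterF.
Qed.

Lemma alpha_limit_sub_image : hausdorff_space Z ->
  backward_precompact finv X xi ->
  alpha_limit ginv setT (F xi) `<=` F @` alpha_limit finv X xi.
Proof.
move=> hausZ orbitK z /alpha_limitP[_ [k kinf kz]].
pose y j := iter (k j) finv xi.
have yK : (y @ \oo) (closure (range (fun k => iter k finv xi)) `&` X).
  by exists 0%N => // j _; split; [apply: subset_closure; exists (k j)|exact: orbitX].
have [x [[_ Xx] /cluster_subseq_cvg[j jinf yjx]]] := orbitK _ _ yK.
have Fyj_z : F \o (y \o j) @ \oo --> z.
  rewrite (_ : F \o (y \o j) = (fun j => iter (k j) ginv (F xi)) \o j).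
    exact: cvg_comp jinf kz.
  by apply: funext => n /=; rewrite iterF.
have Fyj_Fx : F \o (y \o j) @ \oo --> F x.
  exact: cvg_within_continuous FX Xx (fun n => orbitX _) yjx.
exists x; last exact: (cvg_unique _ Fyj_Fx Fyj_z).
by apply/alpha_limitP; split=> //; exists (k \o j) => //; exact: cvg_comp jinf kinf.
Qed.

End alpha_limit_image.

Theorem corollary25 (R : realType) (M Z : metricType R)
  (f finv : M -> M) (g ginv : Z -> Z) (X : set M) (F : M -> Z) (xi : M) :
  separable_space M -> separable_space Z ->
  homeo_with_inv f finv -> homeo_with_inv g ginv ->
  f @` X `<=` X ->
  {within X, continuous F} ->
  (forall x, X x -> F (f x) = g (F x)) ->
  X xi ->
  (forall k : nat, X (iter k finv xi)) ->
  (alpha_limit finv X xi !=set0 ->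
     F @` alpha_limit finv X xi `<=` alpha_limit ginv setT (F xi)) /\
  (backward_precompact finv X xi ->
     F @` alpha_limit finv X xi = alpha_limit ginv setT (F xi)).
Proof.
move=> _ _ [_ [finvK _]] [gK _] _ FX Fsemiconj _ orbitX.
have image_sub := image_alpha_limit_sub finvK gK FX Fsemiconj orbitX.
split=> [_ //|orbitK]; apply/seteqP; split=> //.
exact: alpha_limit_sub_image finvK gK FX Fsemiconj orbitX
  (@metric_hausdorff R Z) orbitK.
Qed.
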